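(* For every integer $n\ge 1$, the hexagonal stacked prism $Y_{6,n}$ is odd prime.
   Context: All graphs are finite and simple. A graph $G$ of order $N$ is odd prime if there is a bijection $\ell:V(G)\to\{1,3,\ldots,2N-1\}$ with $\gcd(\ell(u),\ell(v))=1$ for every edge $uv$. For $k\ge 3$, $n\ge 1$, the stacked prism $Y_{k,n}$ is the Cartesian product $C_k\,\square\,P_n$ of a $k$-cycle and a path on $n$ vertices: vertices $v_{i,j}$ ($1\le i\le n$, $1\le j\le k$), with edges $v_{i,j}v_{i,j+1}$ ($1\le j\le k-1$), $v_{i,k}v_{i,1}$ for each $i$, and $v_{i,j}v_{i+1,j}$ for $1\le i\le n-1$, $1\le j\le k$. *)

From mathcomp Require Import all_boot.
Set Implicit Arguments. Unset Strict Implicit. Unset Printing Implicit Defensive.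

Definition odd_prime (T : finType) (adj : rel T) : Prop :=
  exists l : T -> nat,
    [/\ injective l,
        (forall v, odd (l v) /\ l v < 2 * #|T|),
        (forall m, odd m -> m < 2 * #|T| -> exists v, l v = m)
      & (forall u v, adj u v -> coprime (l u) (l v))].

(* Stacked prism Y_{k,n} = C_k □ P_n.  Vertex v_{i,j} (1<=i<=n, 1<=j<=k)
   is encoded as the pair (i-1, j-1) : 'I_n * 'I_k. *)
Definition prism_vertex (k n : nat) := ('I_n * 'I_k)%type.

Definition prism_adj (k n : nat) : rel (prism_vertex k n) :=
  fun x y =>
    let: (i, j) := x in let: (i', j') := y in
    ((i == i' :> nat) && ((j'.+1 %% k == j) || (j.+1 %% k == j')))
    || ((j == j' :> nat) && ((i.+1 == i') || (i'.+1 == i))).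

Lemma prism_adj_sym k n : symmetric (@prism_adj k n).
Proof.
move=> [i j] [i' j'] /=.
have -> : (i == i' :> nat) = (i' == i :> nat) by apply: eq_sym.
have -> : (j == j' :> nat) = (j' == j :> nat) by apply: eq_sym.
by rewrite (orbC (j'.+1 %% k == j)) (orbC (i.+1 == i')).
Qed.

Lemma prism_adj_irrefl k n : 3 <= k -> irreflexive (@prism_adj k n).
Proof.
move=> hk [i j] /=; rewrite !eqxx /= !orbb.
have hj : j < k := ltn_ord j.
apply/negbTE/negP => /orP [] /eqP.
  case: (ltngtP j.+1 k) => h.
  - by rewrite modn_small // => /esym /n_Sn.
  - by move: h; rewrite ltnS leqNgt hj.
  - by rewrite h modnn => h0; move: hk; rewrite -h -h0.
by move=> /esym /n_Sn.
Qed.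

From mathcomp Require Import all_boot zify.

(* Give the vertex v_{i,j} the label 12(i-1) + s_{(i-1) mod 3}(j), where s_0,
   s_1, s_2 are three arrangements of 1, 3, ..., 11 around the hexagon.  Each
   layer receives exactly the odd numbers of its own block of twelve, so this
   is a bijection onto the odd numbers below 12n.  The arrangements are chosen so
   that adjacent vertices, in one layer or in consecutive layers, get labels
   differing by a power of two, and two odd numbers differing by a power of
   two are coprime. *)

Set Implicit Arguments.
Unset Strict Implicit.
Unset Printing Implicit Defensive.

Lemma all2_nth (S T : Type) (r : S -> T -> bool) x0 y0 s t i :
  all2 r s t -> i < size s -> r (nth x0 s i) (nth y0 t i).
Proof.
by elim: s t i => [|x s IHs] [|y t] [|i] //= /andP [rxy rst]; last exact: IHs.
Qed.

Lemma cycle_nth (T : Type) (e : rel T) x0 s i :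
  cycle e s -> i < size s -> e (nth x0 s i) (nth x0 s (i.+1 %% size s)).
Proof.
case: s => [//|x p] /(pathP x0) e_s lt_i_s.
have := e_s i; rewrite size_rcons => /(_ lt_i_s).
rewrite -rcons_cons !nth_rcons lt_i_s.
rewrite /= ltnS in lt_i_s; case: ltngtP lt_i_s => // [lt_i_p | ->] _.
  by rewrite modn_small.
by rewrite modnn.
Qed.

(* [2.-nat 0] is false, so only the positive truncated difference can count. *)
Definition pow2_apart (a b : nat) : bool := 2.-nat (b - a) || 2.-nat (a - b).

Lemma pow2_apartC : symmetric pow2_apart.
Proof. by move=> a b; rewrite /pow2_apart orbC. Qed.

Lemma pow2_apartDl c a b : pow2_apart (c + a) (c + b) = pow2_apart a b.
Proof. by rewrite /pow2_apart !subnDl. Qed.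

Lemma coprime_addn_pow2 a d : odd a -> 2.-nat d -> coprime a (a + d).
Proof.
move=> odd_a /p_natP [e ->].
by rewrite /coprime gcdnDl; apply: coprimeXr; rewrite coprimen2.
Qed.

Lemma coprime_pow2_apart a b : odd a -> odd b -> pow2_apart a b -> coprime a b.
Proof.
have coprime_sub x y : odd x -> 2.-nat (y - x) -> coprime x y.
  move=> odd_x d_pow2; have /andP [+ _] := d_pow2.
  by rewrite subn_gt0 => /ltnW /subnKC <-; apply: coprime_addn_pow2.
move=> odd_a odd_b /orP [] d_pow2; first exact: coprime_sub.
by rewrite coprime_sym; apply: coprime_sub.
Qed.

Definition odd_range (k : nat) : seq nat := [seq 2 * j + 1 | j <- iota 0 k].

Lemma mem_odd_range k m : (m \in odd_range k) = odd m && (m < 2 * k).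
Proof.
apply/mapP/andP => [[j] | [odd_m lt_m]].
  by rewrite mem_iota => /andP [_ lt_j] ->; rewrite oddD oddM; split; lia.
exists m./2; first by rewrite mem_iota; lia.
by rewrite -[LHS]odd_double_half odd_m -addn1 addnC mul2n.
Qed.

Lemma uniq_odd_range k : uniq (odd_range k).
Proof. by rewrite map_inj_uniq ?iota_uniq // => i j; lia. Qed.

Section StackedLabelling.

Variables (k : nat) (layer : nat -> seq nat).
Hypothesis layer_perm : forall i, perm_eq (layer i) (odd_range k).

Definition stacked_label {n} (v : prism_vertex k n) : nat :=
  let: (i, j) := v in 2 * k * i + nth 0 (layer i) j.

Lemma size_layer i : size (layer i) = k.
Proof. by rewrite (perm_size (layer_perm i)) size_map size_iota. Qed.

Lemma nth_layer i (j : 'I_k) : odd (nth 0 (layer i) j) && (nth 0 (layer i) j < 2 * k).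
Proof.
by rewrite -mem_odd_range -(perm_mem (layer_perm i)) mem_nth ?size_layer.
Qed.

Lemma stacked_label_odd n (v : prism_vertex k n) :
  odd (stacked_label v) && (stacked_label v < 2 * (n * k)).
Proof.
case: v => i j; rewrite /stacked_label.
have /andP [odd_a lt_a] := nth_layer i j.
have lt_i := ltn_ord i.
rewrite oddD oddM /= odd_a; nia.
Qed.

Lemma stacked_label_inj n : injective (@stacked_label n).
Proof.
move=> [i j] [i' j']; rewrite /stacked_label /= => eq_label.
have /andP [_ lt_a] := nth_layer i j.
have /andP [_ lt_a'] := nth_layer i' j'.
have k2_gt0 : 0 < 2 * k by apply: leq_ltn_trans lt_a.
have eq_i : i = i'.
  apply: val_inj; have := congr1 (divn^~ (2 * k)) eq_label.
  by rewrite /= ![2 * k * _]mulnC !divnMDl // !divn_small // !addn0.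
subst i'; have /eqP := addnI eq_label.
rewrite nth_uniq ?size_layer ?(perm_uniq (layer_perm i)) ?uniq_odd_range //.
by move=> /eqP /val_inj ->.
Qed.

Lemma stacked_label_onto n m :
  odd m -> m < 2 * (n * k) -> exists v : prism_vertex k n, stacked_label v = m.
Proof.
move=> odd_m lt_m; have k2_gt0 : 0 < 2 * k by move: lt_m; case: k => //; rewrite muln0.
have lt_i : m %/ (2 * k) < n by rewrite ltn_divLR //; lia.
have odd_r : odd (m %% (2 * k)).
  by move: odd_m; rewrite {1}(divn_eq m (2 * k)) oddD !oddM /= andbF.
have r_in : m %% (2 * k) \in layer (m %/ (2 * k)).
  by rewrite (perm_mem (layer_perm _)) mem_odd_range odd_r ltn_pmod.
have lt_j : index (m %% (2 * k)) (layer (m %/ (2 * k))) < k.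
  by rewrite -[k in _ < k](size_layer (m %/ (2 * k))) index_mem.
by exists (Ordinal lt_i, Ordinal lt_j); rewrite /= nth_index // mulnC -divn_eq.
Qed.

Hypothesis layer_cycle : forall i, cycle pow2_apart (layer i).
Hypothesis layer_vertical :
  forall i, all2 (fun a b => pow2_apart a (2 * k + b)) (layer i) (layer i.+1).

Lemma stacked_label_adj n (u v : prism_vertex k n) :
  prism_adj u v -> pow2_apart (stacked_label u) (stacked_label v).
Proof.
have horizontal i (j j' : 'I_k) :
    j.+1 %% k = j' -> pow2_apart (nth 0 (layer i) j) (nth 0 (layer i) j').
  move=> <-; have := cycle_nth 0 (layer_cycle i).
  by rewrite size_layer => /(_ j (ltn_ord j)).
have vertical i (j : 'I_k) : pow2_apart (2 * k * i + nth 0 (layer i) j)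
                                        (2 * k * i.+1 + nth 0 (layer i.+1) j).
  rewrite mulnSr -addnA pow2_apartDl; have := all2_nth 0 0 (layer_vertical i).
  by rewrite size_layer => /(_ j (ltn_ord j)).
case: u v => i j [i' j']; rewrite /prism_adj /=.
case/orP => [/andP [/eqP <- adj_j] | /andP [/eqP <- adj_i]].
- rewrite pow2_apartDl.
  by case/orP: adj_j => /eqP; [rewrite pow2_apartC|]; apply: horizontal.
- by case/orP: adj_i => /eqP <-; [|rewrite pow2_apartC]; apply: vertical.
Qed.

Lemma odd_prime_prism n : odd_prime (@prism_adj k n).
Proof.
exists stacked_label; rewrite card_prod !card_ord; split.
- exact: stacked_label_inj.
- by move=> v; have /andP [] := stacked_label_odd v.
- exact: stacked_label_onto.
move=> u v adj_uv; apply: coprime_pow2_apart; last exact: stacked_label_adj.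
  by have /andP [] := stacked_label_odd u.
by have /andP [] := stacked_label_odd v.
Qed.

End StackedLabelling.

Definition hex_layers : seq (seq nat) :=
  [:: [:: 1; 3; 7; 11; 9; 5]; [:: 5; 7; 11; 3; 1; 9]; [:: 9; 11; 3; 7; 5; 1]].

Definition hex_layer (i : nat) : seq nat := nth [::] hex_layers (i %% 3).

Lemma hex_layer_periodic (p : seq nat -> seq nat -> bool) :
  all (fun t => p (hex_layer t) (hex_layer t.+1)) (iota 0 3) ->
  forall i, p (hex_layer i) (hex_layer i.+1).
Proof.
move=> /allP p_t i.
have -> : hex_layer i = hex_layer (i %% 3) by rewrite /hex_layer modn_mod.
have -> : hex_layer i.+1 = hex_layer (i %% 3).+1.
  by rewrite /hex_layer -[in RHS]addn1 modnDml addn1.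
by apply: p_t; rewrite mem_iota ltn_mod.
Qed.

Lemma hex_layer_perm i : perm_eq (hex_layer i) (odd_range 6).
Proof.
by apply: (@hex_layer_periodic (fun s _ => perm_eq s (odd_range 6)) _ i); vm_compute.
Qed.

Lemma hex_layer_cycle i : cycle pow2_apart (hex_layer i).
Proof.
by apply: (@hex_layer_periodic (fun s _ => cycle pow2_apart s) _ i); vm_compute.
Qed.

Lemma hex_layer_vertical i :
  all2 (fun a b => pow2_apart a (2 * 6 + b)) (hex_layer i) (hex_layer i.+1).
Proof.
apply: (@hex_layer_periodic (all2 (fun a b => pow2_apart a (2 * 6 + b))) _ i).
by vm_compute.
Qed.

Theorem theorem3p8 (n : nat) : 1 <= n -> odd_prime (@prism_adj 6 n).
Proof.
move=> _; apply: odd_prime_prism.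
- exact: hex_layer_perm.
- exact: hex_layer_cycle.
- exact: hex_layer_vertical.
Qed.
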